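(* Let $\Sigma=(B,\sigma)$ be a signed graph whose underlying graph $B$ is a block that is neither a single edge nor a circle, and suppose $[e,C,+]$ is a positive battery. Then every bridge $D$ of $C$ is balanced (contains no negative circle).
   Context: A signed graph $\Sigma=(G,\sigma)$ is a finite graph $G$ with signature $\sigma:E(G)\to\{+,-\}$. A circle is a connected 2-regular subgraph; its sign is the product of its edge signs. A subgraph is balanced if all its circles are positive. A block is a maximal subgraph without a cutpoint. For a circle $C$, a chord is an edge not in $C$ joining two distinct vertices of $C$; a bridge of $C$ is either a chord or a connected component $D$ of $G\setminus V(C)$ together with all edges joining $D$ to $C$. $[e,C,+]$ means $C$ is a positive circle containing $e$ and is the only positive circle containing $e$. *)

From mathcomp Require Import all_boot.
Set Implicit Arguments. Unset Strict Implicit. Unset Printing Implicit Defensive.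

Section SignedGraph.
Variables (V E : finType).
Variable ends : E -> V * V.
(* sig f = true  means  the edge f is negative *)
Variable sig : E -> bool.

Definition incident (v : V) (f : E) : bool := ((ends f).1 == v) || ((ends f).2 == v).
Definition is_loop (f : E) : bool := (ends f).1 == (ends f).2.

Definition vset (C : {set E}) : {set V} := [set v | [exists f in C, incident v f]].

Definition deg (C : {set E}) (v : V) : nat :=
  \sum_(f in C) (((ends f).1 == v) + ((ends f).2 == v)).

Definition adjE (C : {set E}) : rel V :=
  fun u w => [exists f in C, (ends f == (u, w)) || (ends f == (w, u))].

Definition is_circle (C : {set E}) : Prop :=
  C != set0 /\
  (forall v, v \in vset C -> deg C v = 2) /\
  (forall u w, u \in vset C -> w \in vset C -> connect (adjE C) u w).

(* the sign of a circle is the product of its edge signs *)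
Definition positive (C : {set E}) : bool := ~~ odd #|[set f in C | sig f]|.

Definition balanced (D : {set E}) : Prop :=
  forall C' : {set E}, C' \subset D -> is_circle C' -> positive C'.

Definition adj_avoid (S : {set V}) : rel V :=
  fun u w => [&& u \notin S, w \notin S & adjE [set: E] u w].

Definition connected_avoid (S : {set V}) : Prop :=
  forall u w, u \notin S -> w \notin S -> connect (adj_avoid S) u w.

(* The whole graph is a block: connected, no cutpoint; a loop forms a block
   by itself (standard convention), so a block containing a loop is that loop. *)
Definition is_block : Prop :=
  connected_avoid set0 /\
  (forall v, connected_avoid [set v]) /\
  (forall f, is_loop f -> #|E| = 1).

Definition single_edge : Prop := #|E| = 1.
Definition graph_is_circle : Prop := is_circle [set: E] /\ forall v, v \in vset [set: E].

Definition battery_pos (e : E) (C : {set E}) : Prop :=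
  [/\ is_circle C, e \in C, positive C &
      forall C' : {set E}, is_circle C' -> e \in C' -> positive C' -> C' = C].

(* bridges of C, given by their edge sets:
   a chord (edge not in C joining two distinct vertices of C), or
   a component of G \ V(C) (represented by one of its vertices x) with all
   edges joining it to C, i.e. all edges having an endpoint in that component *)
Definition is_bridge (C : {set E}) (D : {set E}) : Prop :=
  (exists f, [/\ f \notin C, (ends f).1 \in vset C, (ends f).2 \in vset C,
               ~~ is_loop f & D = [set f]]) \/
  (exists x, x \notin vset C /\
     D = [set f | [exists u, incident u f && connect (adj_avoid (vset C)) x u]]).

End SignedGraph.

(* A chord spans no circle, and every other bridge of the battery circle [C] is edge-disjoint
   from [C]; so it suffices that a circle [N] disjoint from [C] is positive. Since the block is
   2-connected (and loopless), some circle through the battery edge [e] meets [N] in two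
   vertices [u] and [v]: rerouting a circle through [e] along a path that avoids one vertex
   either makes it meet [N] twice or shortens a path linking it to [N]. Cutting that circle
   at [N] leaves two disjoint paths from the ends of [e] to [u] and [v], and closing them by
   either arc of [N] gives two circles through [e] whose signs multiply to the sign of [N].
   If [N] were negative, one of them would be positive, hence equal to [C], yet it shares
   edges with [N]. *)

From Pilot Require Import Defs.
From mathcomp Require Import all_boot.
Set Implicit Arguments. Unset Strict Implicit. Unset Printing Implicit Defensive.

Lemma disjoint_notin (T : finType) (A B : {set T}) :
  (forall x, x \in A -> x \notin B) -> [disjoint A & B].
Proof. by move=> AB; rewrite disjoints_subset; apply/subsetP => x /AB; rewrite inE. Qed.

Lemma setUDK (T : finType) (A B : {set T}) : A \subset B -> A :|: (B :\: A) = B.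
Proof. by move=> sAB; rewrite setDE setUIr setUCr setIT (setUidPr sAB). Qed.

Lemma setI_sub1 (T : finType) (A B : {set T}) x :
  A :&: B \subset [set x] -> forall z, z \in A -> z \in B -> z = x.
Proof. by move=> /subsetP sAB z zA zB; apply/set1P/sAB; rewrite inE zA zB. Qed.

Lemma setI_sub2 (T : finType) (A B : {set T}) x y :
  A :&: B \subset [set x; y] -> forall z, z \in A -> z \in B -> z = x \/ z = y.
Proof.
move=> /subsetP sAB z zA zB.
by have /sAB/set2P : z \in A :&: B by rewrite inE zA zB.
Qed.

Section Graphs.
Variables (V E : finType) (ends : E -> V * V).
Implicit Types (C F G H A B P Q X Y Z N W : {set E}) (u v w a b c : V).

Local Notation deg := (deg ends).
Local Notation vset := (vset ends).
Local Notation adjE := (adjE ends).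
Local Notation incident := (incident ends).
Local Notation is_circle := (is_circle ends).

Definition end_mult (f : E) (v : V) : nat := ((ends f).1 == v) + ((ends f).2 == v).

Lemma end_mult_gt0 f v : (0 < end_mult f v) = incident v f.
Proof. by rewrite /end_mult /incident; case: eqP; case: eqP. Qed.

Lemma vsetP F v : (v \in vset F) = (0 < deg F v).
Proof.
rewrite inE lt0n sum_nat_eq0 negb_forall.
apply/existsP/existsP => [[f /andP[fF vf]]|[f f_mult]]; exists f.
  by rewrite fF /= -lt0n end_mult_gt0.
by move: f_mult; rewrite negb_imply -lt0n end_mult_gt0.
Qed.

Lemma deg_eq0 F v : (deg F v == 0) = (v \notin vset F).
Proof. by rewrite vsetP -eqn0Ngt. Qed.

Lemma degU A B v : [disjoint A & B] -> deg (A :|: B) v = deg A v + deg B v.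
Proof. by move=> dAB; rewrite /Defs.deg -bigU //; apply: eq_bigl => f; rewrite !inE. Qed.

Lemma deg_setDK A B v : A \subset B -> deg B v = deg A v + deg (B :\: A) v.
Proof.
move=> sAB; rewrite -{1}(setUDK sAB) degU //.
by apply: disjoint_notin => f fA; rewrite inE fA.
Qed.

Lemma deg_setD A B v : A \subset B -> deg (B :\: A) v = deg B v - deg A v.
Proof. by move=> /deg_setDK ->; rewrite addKn. Qed.

Lemma degS A B v : A \subset B -> deg A v <= deg B v.
Proof. by move=> /deg_setDK ->; apply: leq_addr. Qed.

Lemma deg_set1 f v : deg [set f] v = end_mult f v.
Proof. by rewrite /Defs.deg big_set1. Qed.

Lemma deg_set0 v : deg set0 v = 0.
Proof. by rewrite /Defs.deg big_set0. Qed.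

Lemma vsetU A B : vset (A :|: B) = vset A :|: vset B.
Proof.
apply/setP => v; rewrite !inE; apply/existsP/orP.
  by move=> [f /andP[]]; rewrite inE => /orP[] fA vf; [left|right];
    apply/existsP; exists f; rewrite fA.
by move=> [] /existsP[f /andP[fA vf]]; exists f; rewrite inE fA ?orbT.
Qed.

Lemma vsetS A B : A \subset B -> vset A \subset vset B.
Proof.
move=> sAB; apply/subsetP => v; rewrite !inE => /existsP[f /andP[fA vf]].
by apply/existsP; exists f; rewrite (subsetP sAB).
Qed.

Lemma vset1 f : vset [set f] = [set (ends f).1; (ends f).2].
Proof.
by apply/setP => v; rewrite vsetP deg_set1 end_mult_gt0 !inE /incident ![v == _]eq_sym.
Qed.

Lemma vset0 : vset set0 = set0.
Proof. by apply/setP => v; rewrite vsetP deg_set0 inE. Qed.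

Lemma incident_vset F f v : f \in F -> incident v f -> v \in vset F.
Proof. by move=> fF vf; rewrite inE; apply/existsP; exists f; rewrite fF. Qed.

Lemma ends_vset F f : f \in F -> ((ends f).1 \in vset F) && ((ends f).2 \in vset F).
Proof. by move=> fF; rewrite !(incident_vset fF) // /incident eqxx ?orbT. Qed.

Lemma vset_eq0 F : (vset F == set0) = (F == set0).
Proof.
apply/eqP/eqP => [F0|->]; last exact: vset0.
apply/setP => f; rewrite inE; apply/negP => fF.
by move: (ends_vset fF); rewrite F0 inE.
Qed.

Lemma adjE_sym F : symmetric (adjE F).
Proof.
by move=> u w; apply/existsP/existsP => -[f /andP[fF uw]]; exists f; rewrite fF orbC.
Qed.

Lemma connect_adjE_sym F : connect_sym (adjE F).
Proof. exact/sym_connect_sym/adjE_sym. Qed.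

Lemma connect_adjES A B u w :
  A \subset B -> connect (adjE A) u w -> connect (adjE B) u w.
Proof.
move=> sAB; apply: connect_sub => x y /existsP[f /andP[fA xy]].
by apply: connect1; apply/existsP; exists f; rewrite (subsetP sAB).
Qed.

Lemma adjEP F u w : adjE F u w ->
  exists2 f, f \in F & ends f = (u, w) \/ ends f = (w, u).
Proof. by move=> /existsP[f /andP[fF /orP[]/eqP]]; exists f => //; [left|right]. Qed.

Lemma adjE_ends F f : f \in F -> adjE F (ends f).1 (ends f).2.
Proof. by move=> fF; apply/existsP; exists f; rewrite fF -surjective_pairing eqxx. Qed.

Lemma adjE_vset F u w : adjE F u w -> (u \in vset F) && (w \in vset F).
Proof. by move=> /adjEP[f fF [] ends_f]; move: (ends_vset fF); rewrite ends_f // andbC. Qed.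

Lemma connect_closed (r : rel V) (S : pred V) x y :
  (forall u w, S u -> r u w -> S w) -> S x -> connect r x y -> S y.
Proof.
move=> closedS Sx /connectP[s]; elim: s x Sx => [|z s IHs] x Sx /=; first by move=> _ ->.
by move=> /andP[xz zs] y_last; apply: (IHs z) => //; apply: closedS xz.
Qed.

Lemma connect_vset F u w : connect (adjE F) u w -> u \in vset F -> w \in vset F.
Proof.
move=> uw uF; apply: (connect_closed (S := fun x => x \in vset F) _ uF uw).
by move=> x y _ /adjE_vset/andP[].
Qed.

Lemma connect_vset_start F u w : connect (adjE F) u w -> u != w -> u \in vset F.
Proof.
move=> /connectP[[|x s] /=]; first by move=> _ ->; rewrite eqxx.
by move=> /andP[/adjE_vset/andP[]].
Qed.

Definition connected F :=
  forall u w, u \in vset F -> w \in vset F -> connect (adjE F) u w.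

(* Paths are given by their edge sets; the trivial path from [a] to [a] is [set0]. *)
Definition is_path F a b :=
  [/\ deg F a = (a != b), deg F b = (a != b),
      (forall v, v \in vset F -> v != a -> v != b -> deg F v = 2) &
      (forall v, v \in vset F -> connect (adjE F) a v)].

Lemma sum_eq_in (S : {set V}) x : \sum_(y in S) (x == y) = (x \in S).
Proof.
have [xS|xS] := boolP (x \in S).
  by rewrite (bigD1 x) //= eqxx big1 // => y /andP[_]; rewrite eq_sym => /negbTE ->.
by rewrite big1 // => y yS; apply/eqP; rewrite eqb0; apply: contraNneq xS => ->.
Qed.

Lemma sum_even (I : finType) (P : pred I) (G : I -> nat) :
  (forall i, P i -> ~~ odd (G i)) -> ~~ odd (\sum_(i | P i) G i).
Proof.
move=> evenG; apply: (big_ind (fun n => ~~ odd n)) => // m n.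
by rewrite oddD => /negbTE -> /negbTE ->.
Qed.

Lemma handshake_component F x :
  ~~ odd (\sum_(y in [set y | connect (adjE F) x y]) deg F y).
Proof.
set S := [set y | connect (adjE F) x y].
have -> : \sum_(y in S) deg F y =
          \sum_(f in F) (((ends f).1 \in S) + ((ends f).2 \in S)).
  rewrite (eq_bigr (fun y => \sum_(f in F) end_mult f y)) //.
  by rewrite exchange_big; apply: eq_bigr => f _; rewrite big_split /= !sum_eq_in.
apply: sum_even => f fF.
have -> : ((ends f).2 \in S) = ((ends f).1 \in S).
  rewrite !inE; apply/idP/idP => xf; apply: connect_trans xf (connect1 _).
    by rewrite adjE_sym; apply: adjE_ends.
  exact: adjE_ends.
by rewrite addnn odd_double.
Qed.

Lemma odd_deg_partner F x : odd (deg F x) ->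
  exists y, [/\ y != x, connect (adjE F) x y & odd (deg F y)].
Proof.
move=> odd_x.
have [/existsP[y /and3P[]]|] :=
  boolP [exists y, [&& y != x, connect (adjE F) x y & odd (deg F y)]]; first by exists y.
rewrite negb_exists => /forallP noy; exfalso.
move: (handshake_component F x); rewrite (bigD1 x) ?inE ?connect0 //= oddD odd_x /=.
rewrite negbK; apply/negP; apply: sum_even => y; rewrite inE => /andP[xy yx].
by move: (noy y); rewrite yx xy.
Qed.

(* A component of [F] avoiding [a] and [b] is closed in the connected [G], so it contains
   [a]; one containing [b] but not [a] would have [b] as its only odd vertex. *)
Lemma connected_from_degrees G F a b : connected G -> F \subset G -> a \in vset G ->
  deg F a <= 1 -> deg F b <= 1 ->
  (forall y, y \in vset F -> y != a -> y != b ->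
      ~~ odd (deg F y) /\ (forall g, g \in G -> incident y g -> g \in F)) ->
  forall v, v \in vset F -> connect (adjE F) a v.
Proof.
move=> cG sFG aG da db inner v vF.
rewrite connect_adjE_sym; apply/negPn/negP => va.
have [vb|vb] := boolP (connect (adjE F) v b).
  have bF : b \in vset F by apply: connect_vset vb vF.
  have odd_b : odd (deg F b) by move: db bF; rewrite vsetP; case: (deg F b) => [|[]].
  have [y [yb by_ odd_y]] := odd_deg_partner odd_b.
  have yF : y \in vset F by apply: connect_vset by_ bF.
  have ya : y != a by apply: contraNneq va => <-; apply: connect_trans vb by_.
  by have [/negP] := inner y yF ya yb.
have vG : v \in vset G by apply: (subsetP (vsetS sFG)).
apply: (negP va).
apply: (connect_closed (S := connect (adjE F) v) _ (connect0 _ v) (cG v a vG aG)).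
move=> u w vu /adjEP[g gG ends_g].
have uF : u \in vset F by apply: connect_vset vu vF.
have ua : u != a by apply: contraNneq va => <-.
have ub : u != b by apply: contraNneq vb => <-.
have gF : g \in F.
  apply: (inner u uF ua ub).2 => //.
  by rewrite /incident; case: ends_g => -> /=; rewrite eqxx ?orbT.
apply: connect_trans vu (connect1 _).
by apply/existsP; exists g; rewrite gF; case: ends_g => ->; rewrite eqxx ?orbT.
Qed.

Section Loopless.
Hypothesis loopless : forall f, ~~ is_loop ends f.

Lemma end_mult_le1 f v : end_mult f v <= 1.
Proof.
move: (loopless f); rewrite /is_loop /end_mult; case: (ends f) => x y /= xy.
by case: eqP => [xv|_]; case: eqP => [yv|_] //; rewrite xv yv eqxx in xy.
Qed.

Lemma is_pathxx P a : is_path P a a -> P = set0.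
Proof.
move=> [da _ _ aP]; apply/eqP; rewrite -vset_eq0; apply/eqP/setP => v.
rewrite in_set0; apply/negbTE/negP => vP.
have aNP : a \notin vset P by rewrite -deg_eq0 da eqxx.
have [av|av] := eqVneq a v; first by rewrite av vP in aNP.
by rewrite (connect_vset_start (aP v vP) av) in aNP.
Qed.

Lemma is_path0 a : is_path set0 a a.
Proof. by split; rewrite ?deg_set0 ?eqxx // => v; rewrite vset0 inE. Qed.

Lemma is_path_ends P a b : is_path P a b -> a != b -> (a \in vset P) && (b \in vset P).
Proof. by move=> [da db _ _] ab; rewrite !vsetP da db ab. Qed.

Lemma is_path_connected P a b : is_path P a b -> connected P.
Proof.
move=> [_ _ _ aP] u w uP wP; apply: connect_trans (aP w wP).
by rewrite connect_adjE_sym; apply: aP.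
Qed.

Lemma is_path_rev P a b : is_path P a b -> is_path P b a.
Proof.
move=> pP; have [da db inner _] := pP.
split; rewrite ?(eq_sym b a) //; first by move=> v vP vb va; apply: inner.
move=> v vP; have [ab|ab] := eqVneq a b.
  by move: vP; rewrite ab in pP; rewrite (is_pathxx pP) vset0 inE.
by have /andP[_ bP] := is_path_ends pP ab; apply: (is_path_connected pP bP vP).
Qed.

Lemma is_path_edge f : is_path [set f] (ends f).1 (ends f).2.
Proof.
have f12 := loopless f; rewrite /is_loop in f12.
split; rewrite ?deg_set1 /end_mult ?eqxx ?(eq_sym (ends f).2) ?(negbTE f12) //.
  by move=> v; rewrite vset1 !inE => /orP[] /eqP ->; rewrite eqxx.
move=> v; rewrite vset1 !inE => /orP[] /eqP ->; first exact: connect0.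
by apply/connect1/adjE_ends; rewrite inE.
Qed.

Lemma is_path_adjE f u w : ends f = (u, w) \/ ends f = (w, u) -> is_path [set f] u w.
Proof. by case=> ends_f; [|apply: is_path_rev]; move: (is_path_edge f); rewrite ends_f. Qed.

Lemma disjoint_vsetI1 P Q b : vset P :&: vset Q \subset [set b] -> [disjoint P & Q].
Proof.
move=> PQ; apply: disjoint_notin => f fP; apply/negP => fQ.
have /andP[f1P f2P] := ends_vset fP; have /andP[f1Q f2Q] := ends_vset fQ.
by move: (loopless f); rewrite /is_loop (setI_sub1 PQ f1P f1Q) (setI_sub1 PQ f2P f2Q) eqxx.
Qed.

Lemma is_path_cat P Q a b c : is_path P a b -> is_path Q b c ->
  vset P :&: vset Q \subset [set b] -> is_path (P :|: Q) a c.
Proof.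
move=> pP pQ PQ; have dPQ := disjoint_vsetI1 PQ; have PQb := setI_sub1 PQ.
have [ab|ab] := eqVneq a b; first by subst b; rewrite (is_pathxx pP) set0U.
have [bc|bc] := eqVneq b c; first by subst c; rewrite (is_pathxx pQ) setU0.
have /andP[aP bP] := is_path_ends pP ab; have /andP[_ cQ] := is_path_ends pQ bc.
have aQ : a \notin vset Q by apply: contraNN ab => /(PQb a aP) ->.
have cP : c \notin vset P by apply: contraNN bc => /PQb-/(_ cQ) ->; rewrite eqxx.
have ac : a != c by apply: contraNneq cP => <-.
have [daP dbP innerP aPv] := pP; have [dbQ dcQ innerQ bQv] := pQ.
move: aQ cP; rewrite -!deg_eq0 => /eqP aQ /eqP cP.
split; rewrite ?degU // ?ac ?daP ?aQ ?cP ?dcQ ?bc ?ab //.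
  move=> v; rewrite vsetU inE degU // => vPQ va vc.
  have [->|vb] := eqVneq v b; first by rewrite dbP dbQ ab bc.
  case/orP: vPQ => vX.
    have /eqP -> : deg Q v == 0 by rewrite deg_eq0; apply: contraNN vb => /(PQb v vX) ->.
    by rewrite innerP.
  have /eqP -> : deg P v == 0 by rewrite deg_eq0; apply: contraNN vb => /PQb-/(_ vX) ->.
  by rewrite innerQ.
move=> v; rewrite vsetU inE => /orP[] vX.
  exact: connect_adjES (subsetUl _ _) (aPv v vX).
apply: connect_trans (connect_adjES (subsetUl _ _) (aPv b bP)) _.
exact: connect_adjES (subsetUr _ _) (bQv v vX).
Qed.

Lemma circle_of_paths P Q a b : is_path P a b -> is_path Q a b -> a != b ->
  [disjoint P & Q] -> vset P :&: vset Q \subset [set a; b] -> is_circle (P :|: Q).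
Proof.
move=> pP pQ ab dPQ PQ; have PQab := setI_sub2 PQ.
have /andP[aP _] := is_path_ends pP ab.
have [daP dbP innerP aPv] := pP; have [daQ dbQ innerQ aQv] := pQ.
split; [|split].
- apply/set0Pn; move: aP; rewrite inE => /existsP[f /andP[fP _]].
  by exists f; rewrite inE fP.
- move=> v; rewrite degU // vsetU inE.
  have [->|va] := eqVneq v a; first by rewrite daP daQ ab.
  have [->|vb] := eqVneq v b; first by rewrite dbP dbQ ab.
  move=> /orP[] vX.
    have /eqP -> : deg Q v == 0.
      by rewrite deg_eq0; apply/negP => vQ; case: (PQab v vX vQ) => /eqP; apply/negP.
    by rewrite innerP.
  have /eqP -> : deg P v == 0.
    by rewrite deg_eq0; apply/negP => vP; case: (PQab v vP vX) => /eqP; apply/negP.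
  by rewrite innerQ.
- have reach v : v \in vset (P :|: Q) -> connect (adjE (P :|: Q)) a v.
    rewrite vsetU inE => /orP[] vX.
      exact: connect_adjES (subsetUl _ _) (aPv v vX).
    exact: connect_adjES (subsetUr _ _) (aQv v vX).
  move=> u w uX wX; apply: connect_trans (reach w wX).
  by rewrite connect_adjE_sym; apply: reach.
Qed.

Lemma circle_connected Z : is_circle Z -> connected Z.
Proof. by case=> _ []. Qed.

Lemma is_path_of_degrees G F a b : connected G -> F \subset G -> a \in vset G ->
  deg F a = (a != b) -> deg F b = (a != b) ->
  (forall y, y \in vset F -> y != a -> y != b ->
     deg F y = 2 /\ (forall g, g \in G -> incident y g -> g \in F)) ->
  is_path F a b.
Proof.
move=> cG sFG aG da db inner; split=> //; first by move=> y yF ya yb; case: (inner y yF ya yb).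
apply: (connected_from_degrees (b := b) cG sFG aG); rewrite ?da ?db ?leq_b1 //.
by move=> y yF ya yb; have [-> closed] := inner y yF ya yb.
Qed.

Lemma incident_setD G H g y : y \notin vset H -> g \in G -> incident y g -> g \in G :\: H.
Proof. by move=> yH gG yg; rewrite inE gG andbT; apply: contraNN yH => /incident_vset; apply. Qed.

Lemma circle_setD_path Z A u v : is_circle Z -> A \subset Z -> is_path A u v -> u != v ->
  is_path (Z :\: A) u v.
Proof.
move=> cZ sAZ pA uv; have [_ [degZ cZv]] := cZ.
have [duA dvA innerA _] := pA; have /andP[uA vA] := is_path_ends pA uv.
have vsAZ := subsetP (vsetS sAZ).
apply: (is_path_of_degrees cZv (subsetDl Z A)); rewrite ?deg_setD ?degZ ?vsAZ ?duA ?dvA ?uv //.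
move=> w wZA wu wv; have wZ := subsetP (vsetS (subsetDl Z A)) w wZA.
have wA : w \notin vset A.
  by apply/negP => wA; move: wZA; rewrite vsetP deg_setD // degZ // innerA.
split; last by move=> g gZ; apply: incident_setD.
by move: wA; rewrite -deg_eq0 deg_setD // degZ // => /eqP ->.
Qed.

Lemma circle_setD1 Z f : is_circle Z -> f \in Z -> is_path (Z :\ f) (ends f).1 (ends f).2.
Proof.
by move=> cZ fZ; apply: circle_setD_path (is_path_edge f) (loopless f); rewrite ?sub1set.
Qed.

Lemma is_path_split P P1 a b c : is_path P a b -> P1 \subset P -> is_path P1 a c ->
  is_path (P :\: P1) c b /\ vset P1 :&: vset (P :\: P1) \subset [set c].
Proof.
move=> pP sP1 pP1.
have [ac|ac] := eqVneq a c.
  by subst c; rewrite (is_pathxx pP1) setD0 vset0 set0I sub0set.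
have ab : a != b.
  apply/negP => /eqP ab; subst b.
  have P10 : P1 = set0 by apply/eqP; rewrite -subset0 -(is_pathxx pP).
  by move: (is_path_ends pP1 ac); rewrite P10 vset0 inE.
have /andP[_ cP1] := is_path_ends pP1 ac.
have [daP dbP innerP _] := pP; have [daP1 dcP1 innerP1 _] := pP1.
have vsP1 := subsetP (vsetS sP1); have vsD := subsetP (vsetS (subsetDl P P1)).
have interior w : w \in vset P1 -> w != a -> w != c -> w != b /\ deg (P :\: P1) w = 0.
  move=> wP1 wa wc; have d1 := innerP1 w wP1 wa wc.
  have wb : w != b by apply: contraTneq (degS w sP1) => wb; rewrite d1 wb dbP ab.
  by rewrite deg_setD // innerP ?vsP1 // d1.
have dDa : deg (P :\: P1) a = 0 by rewrite deg_setD // daP daP1 ab ac.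
have dPc : deg P c = (c != b).+1.
  by have [->|cb] := eqVneq c b; rewrite ?dbP ?ab // innerP ?vsP1 // eq_sym.
split; last first.
  apply/subsetP => w /setIP[wP1 wD]; apply/set1P.
  have [wa|wa] := eqVneq w a; first by move: wD; rewrite vsetP wa dDa.
  by apply/eqP; apply: contraTT wD => wc; rewrite vsetP (interior w wP1 wa wc).2.
apply: (is_path_of_degrees (is_path_connected pP) (subsetDl P P1) (vsP1 c cP1)).
- by rewrite deg_setD // dPc dcP1 ac subn1.
- have [cb|cb] := eqVneq c b; first by rewrite deg_setD // dbP -cb dcP1 subnn.
  have bP1 : b \notin vset P1.
    have [ba bc] : b != a /\ b != c by rewrite !(eq_sym b).
    by apply/negP => /interior/(_ ba bc)[]; rewrite eqxx.
  by move: bP1; rewrite -deg_eq0 deg_setD // dbP ab => /eqP ->.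
move=> y yD yc yb.
have ya : y != a by apply: contraTneq yD => ->; rewrite vsetP dDa.
have yP1 : y \notin vset P1.
  by apply: contraTN yD => yP1; rewrite vsetP (interior y yP1 ya yc).2.
split; last by move=> g gP; apply: incident_setD.
by move: yP1; rewrite -deg_eq0 deg_setD // innerP ?vsD // => /eqP ->.
Qed.

Lemma path_first_hit F (T : {set V}) a s : path (adjE F) a s -> uniq (a :: s) ->
  last a s \in T -> exists t X, [/\ t \in T, X \subset F, is_path X a t,
    vset X :&: T \subset [set t] & {subset vset X <= a :: s}].
Proof.
have stop a' s' : a' \in T -> exists t X, [/\ t \in T, X \subset F, is_path X a' t,
    vset X :&: T \subset [set t] & {subset vset X <= a' :: s'}].
  move=> a'T; exists a', set0; rewrite sub0set vset0 set0I sub0set.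
  by split=> // [|z]; [apply: is_path0 | rewrite inE].
elim: s a => [|w s IHs] a /=; first by move=> _ _; apply: stop.
move=> /andP[aw ws] /andP[aNws uniq_ws] lastT.
have [aT|aT] := boolP (a \in T); first exact: stop.
have [t [X [tT sXF pX XT sXs]]] := IHs w ws uniq_ws lastT.
have [f fF ends_f] := adjEP aw.
have vf : vset [set f] = [set a; w] by rewrite vset1; case: ends_f => ->; rewrite // setUC.
have aX : a \notin vset X by apply: contra aNws => /sXs.
have fX : vset [set f] :&: vset X \subset [set w].
  apply/subsetP => z /setIP[]; rewrite vf => /set2P[] -> zX; last exact: set11.
  by rewrite zX in aX.
exists t, ([set f] :|: X); split => //.
- by rewrite subUset sub1set fF.
- exact: is_path_cat (is_path_adjE ends_f) pX fX.
- apply/subsetP => z /setIP[]; rewrite vsetU => /setUP[zf|zX] zT; last exact/set1P/(setI_sub1 XT).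
  move: zf zT; rewrite vf => /set2P[] -> zT; first by rewrite zT in aT.
  have [<-|wt] := eqVneq w t; first exact: set11.
  by have /andP[wX _] := is_path_ends pX wt; apply/set1P/(setI_sub1 XT wX).
- move=> z; rewrite vsetU => /setUP[]; last by move=> /sXs zws; rewrite in_cons zws orbT.
  by rewrite vf => /set2P[] ->; rewrite !in_cons eqxx ?orbT.
Qed.

Lemma connect_first_hit F a (T : {set V}) y : connect (adjE F) a y -> y \in T ->
  exists t X, [/\ t \in T, X \subset F, is_path X a t & vset X :&: T \subset [set t]].
Proof.
move=> /connectP[s ps ->]; case: (shortenP ps) => s' ps' uniq_s' _ yT.
by have [t [X [? ? ? ? _]]] := path_first_hit ps' uniq_s' yT; exists t, X.
Qed.

Lemma connect_is_path F a b :
  connect (adjE F) a b -> exists2 X : {set E}, X \subset F & is_path X a b.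
Proof.
move=> ab; have [t [X [/set1P -> sXF pX _]]] := connect_first_hit ab (set11 b).
by exists X.
Qed.

Definition avoiding x := [set g | ~~ incident x g].

Lemma avoiding_vset X x : X \subset avoiding x -> x \notin vset X.
Proof.
move=> sX; apply/negP; rewrite inE => /existsP[g /andP[gX xg]].
by move: (subsetP sX g gX); rewrite inE xg.
Qed.

Lemma disjoint_setUl A B Z : [disjoint A & Z] -> [disjoint B & Z] -> [disjoint A :|: B & Z].
Proof. by move=> dA dB; rewrite -setI_eq0 setIUl !disjoint_setI0 ?setU0. Qed.

Lemma circle_other_vertex Z z : is_circle Z -> exists2 c, c \in vset Z & c != z.
Proof.
move=> [/set0Pn[f fZ] _]; have /andP[f1Z f2Z] := ends_vset fZ.
have [f1z|] := eqVneq (ends f).1 z; last by exists (ends f).1.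
by exists (ends f).2; rewrite // -f1z eq_sym; apply: loopless.
Qed.

(* [Z'] is [Z] with the arc from [a] to [c] that avoids [e0] replaced by [W]. *)
Lemma circle_reroute Z e0 a c W : is_circle Z -> e0 \in Z -> a != c ->
  a \in vset Z -> c \in vset Z -> is_path W a c ->
  vset W :&: vset Z \subset [set a; c] -> [disjoint W & Z] ->
  exists Z', [/\ is_circle Z', e0 \in Z', {subset vset W <= vset Z'} &
                 {subset vset Z' <= vset Z :|: vset W}].
Proof.
move=> cZ e0Z ac aZ cZv pW WZ dWZ.
have via A : A \subset Z -> is_path A a c -> e0 \in A ->
    exists Z', [/\ is_circle Z', e0 \in Z', {subset vset W <= vset Z'} &
                   {subset vset Z' <= vset Z :|: vset W}].
  move=> sAZ pA e0A; exists (A :|: W); split.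
  - apply: circle_of_paths pA pW ac _ _; first by rewrite disjoint_sym (disjointWr sAZ).
    apply/subsetP => z /setIP[zA zW]; apply/set2P.
    exact: (setI_sub2 WZ zW (subsetP (vsetS sAZ) z zA)).
  - by rewrite inE e0A.
  - by move=> z zW; rewrite vsetU; apply/setUP; right.
  - move=> z; rewrite vsetU => /setUP[zA|zW]; apply/setUP; [left|by right].
    exact: (subsetP (vsetS sAZ) z zA).
have [A sAZ pA] := connect_is_path (circle_connected cZ aZ cZv).
have [e0A|e0A] := boolP (e0 \in A); first exact: via e0A.
by apply: (via (Z :\: A)); rewrite ?subsetDl ?inE ?e0A ?e0Z //; apply: circle_setD_path.
Qed.

Definition meets_twice Z N := exists u v,
  [/\ u != v, u \in vset Z, v \in vset Z, u \in vset N & v \in vset N].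

Lemma circle_add_edge W e : is_path W (ends e).1 (ends e).2 -> e \notin W ->
  is_circle ([set e] :|: W).
Proof.
move=> pW eW; apply: circle_of_paths (is_path_edge e) pW (loopless e) _ _.
  by rewrite disjoints1.
by rewrite vset1 subsetIl.
Qed.

Lemma vset_circle_setD1 Z f w : is_circle Z -> f \in Z -> w \in vset Z -> w \in vset (Z :\ f).
Proof.
move=> [_ [degZ _]] fZ wZ; rewrite vsetP deg_setD ?sub1set // deg_set1 degZ //.
by have := end_mult_le1 f w; case: (end_mult f w) => [|[]].
Qed.

(* Any arc of [N] from [u] to [v] closes [e], [X] and [Y] into a circle. *)
Definition ear e N X Y u v :=
  [/\ is_path X (ends e).1 u, is_path Y v (ends e).2, e \notin X :|: Y,
      vset X :&: vset N \subset [set u] /\ vset Y :&: vset N \subset [set v] &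
      [disjoint vset X & vset Y]].

Lemma ear_of_meeting_circle Z N e : is_circle Z -> e \in Z -> meets_twice Z N ->
  exists u v X Y, [/\ u != v, u \in vset N, v \in vset N & ear e N X Y u v].
Proof.
move=> cZ eZ [u0 [v0 [uv0 u0Z v0Z u0N v0N]]].
set p := (ends e).1; set q := (ends e).2.
have pq : p != q := loopless e.
have pR := circle_setD1 cZ eZ; rewrite -/p -/q in pR; set R := Z :\ e in pR.
have [u0R v0R] := (vset_circle_setD1 cZ eZ u0Z, vset_circle_setD1 cZ eZ v0Z).
have /andP[pR' _] := is_path_ends pR pq.
have [u [X [uN sX pX XN]]] := connect_first_hit (is_path_connected pR pR' u0R) u0N.
have [pR2 XR2] := is_path_split pR sX pX; set R2 := R :\: X in pR2 XR2.
have [w [wR wN wu]] : exists w, [/\ w \in vset R, w \in vset N & w != u].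
  by have [u0u|] := eqVneq u0 u; [exists v0; rewrite -u0u eq_sym | exists u0].
have wR2 : w \in vset R2.
  move: wR; rewrite !vsetP (deg_setDK w sX).
  suff /eqP -> : deg X w == 0 by [].
  by rewrite deg_eq0; apply: contraNN wu => wX; apply/eqP/(setI_sub1 XN wX wN).
have uq : u != q.
  by apply: contraTneq wR2 => uq; rewrite uq in pR2; rewrite (is_pathxx pR2) vset0 inE.
have /andP[_ qR2] := is_path_ends pR2 uq.
have [v [Y [vN sY pY YN]]] := connect_first_hit (is_path_connected pR2 qR2 wR2) wN.
have uv : u != v.
  apply/negP => /eqP uv; subst v.
  have [/is_pathxx/eqP R2Y _] := is_path_split (is_path_rev pR2) sY pY.
  have wY : w \in vset Y by rewrite setD_eq0 in R2Y; apply: (subsetP (vsetS R2Y)).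
  by move: wu; rewrite (setI_sub1 YN wY wN) eqxx.
have sR2R : R2 \subset R by apply: subsetDl.
exists u, v, X, Y; split=> //; split=> //; first exact: is_path_rev.
- have eR : e \notin R by rewrite !inE eqxx.
  rewrite in_setU negb_or; apply/andP; split; apply: contraNN eR => eXY.
    exact: (subsetP sX).
  exact: (subsetP sR2R) (subsetP sY _ eXY).
apply: disjoint_notin => y yX; apply: contraNN uv => yY.
have yu : y = u by apply: (setI_sub1 XR2 yX); apply: (subsetP (vsetS sY)).
by rewrite -yu (setI_sub1 YN yY) ?yu.
Qed.

Variable sig : E -> bool.
Local Notation positive := (positive sig).

Definition negative F := odd #|[set f in F | sig f]|.

Lemma negativeU A B : [disjoint A & B] -> negative (A :|: B) = negative A (+) negative B.
Proof.
move=> dAB; rewrite /negative -oddD.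
have -> : [set f in A :|: B | sig f] = [set f in A | sig f] :|: [set f in B | sig f].
  by apply/setP => f; rewrite !inE andb_orl.
rewrite cardsU (_ : _ :&: _ = set0) ?cards0 ?subn0 //.
by apply: disjoint_setI0; apply: disjoint_notin => f; rewrite !inE => /andP[/(disjointFr dAB) ->].
Qed.

Section Ear.
Variables (e : E) (N X Y : {set E}) (u v : V).
Hypotheses (earXY : ear e N X Y u v) (eN : e \notin N).

Lemma ear_circle A : A \subset N -> is_path A u v ->
  is_circle ([set e] :|: (X :|: A :|: Y)) /\
  negative ([set e] :|: (X :|: A :|: Y)) =
    negative [set e] (+) negative X (+) negative A (+) negative Y.
Proof.
move=> sAN pA; have [pX pY eXY [XN YN] dXY] := earXY.
have vsA := subsetP (vsetS sAN).
have XA : vset X :&: vset A \subset [set u].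
  by apply/subsetP => y /setIP[yX /vsA yN]; apply/set1P/(setI_sub1 XN yX yN).
have XAY : vset (X :|: A) :&: vset Y \subset [set v].
  apply/subsetP => y /setIP[]; rewrite vsetU => /setUP[yX|/vsA yN] yY; apply/set1P.
    by rewrite (disjointFr dXY yX) in yY.
  exact: (setI_sub1 YN yY yN).
have eW : e \notin X :|: A :|: Y.
  move: eXY; rewrite !in_setU !negb_or => /andP[-> ->]; rewrite andbT /=.
  by apply: contraNN eN => /(subsetP sAN).
split; first exact: circle_add_edge (is_path_cat (is_path_cat pX pA XA) pY XAY) eW.
rewrite negativeU ?disjoints1 // negativeU ?(disjoint_vsetI1 XAY) //.
by rewrite negativeU ?(disjoint_vsetI1 XA) // !addbA.
Qed.

(* The two arcs of the negative circle [N] between [u] and [v] close the ear into two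
   circles through [e] of opposite signs. *)
Lemma ear_positive_circle : is_circle N -> negative N -> u != v ->
  u \in vset N -> v \in vset N ->
  exists C', [/\ is_circle C', positive C', e \in C' & ~~ [disjoint C' & N]].
Proof.
move=> cN negN uv uN vN.
have [A1 sA1 pA1] := connect_is_path (circle_connected cN uN vN).
have pA2 := circle_setD_path cN sA1 pA1 uv.
have negN12 : negative N = negative A1 (+) negative (N :\: A1).
  rewrite -{1}(setUDK sA1) negativeU //.
  by apply: disjoint_notin => g gA; rewrite inE gA.
have via A : A \subset N -> is_path A u v -> ~~ negative ([set e] :|: (X :|: A :|: Y)) ->
    exists C', [/\ is_circle C', positive C', e \in C' & ~~ [disjoint C' & N]].
  move=> sAN pA posA; have [cC' _] := ear_circle sAN pA.
  exists ([set e] :|: (X :|: A :|: Y)); split=> //; first by rewrite !inE eqxx.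
  have /andP[uA _] := is_path_ends pA uv.
  move: uA; rewrite inE => /existsP[g /andP[gA _]].
  by apply/negP => /disjointFl/(_ (subsetP sAN g gA))/negbT; rewrite !inE gA !orbT.
have [_ neg1] := ear_circle sA1 pA1; have [_ neg2] := ear_circle (subsetDl N A1) pA2.
have [pos1|] := boolP (~~ negative ([set e] :|: (X :|: A1 :|: Y))); first exact: via pos1.
rewrite negbK => n1; apply: (via _ (subsetDl N A1) pA2).
move: n1 negN; rewrite neg1 neg2 negN12.
by case: (negative [set e]); case: (negative X); case: (negative Y); case: (negative A1);
   case: (negative (N :\: A1)).
Qed.

End Ear.

Section TwoConnected.
Hypothesis connect_avoiding :
  forall x u w, u != x -> w != x -> connect (adjE (avoiding x)) u w.
Hypothesis connect_all : forall u w, connect (adjE [set: E]) u w.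
Variable e0 : E.

Definition circle_meeting_twice N :=
  exists Z, [/\ is_circle Z, e0 \in Z & meets_twice Z N].

(* The path [Q] exists because deleting [a] leaves the graph connected. *)
Lemma detour Z (T : {set V}) a n : is_circle Z -> a \in vset Z -> n \in T ->
    [disjoint T & vset Z] ->
  exists c z Q, [/\ c \in vset Z, c != a, z \in T, is_path Q c z &
    [/\ a \notin vset Q, vset Q :&: vset Z \subset [set c] & vset Q :&: T \subset [set z]]].
Proof.
move=> cZ aZ nT dTZ.
have [c0 c0Z c0a] := circle_other_vertex a cZ.
have nZ : n \notin vset Z by rewrite (disjointFr dTZ nT).
have na : n != a by apply: contraNneq nZ => ->.
have [c [X [cZv sX pX XZ]]] := connect_first_hit (connect_avoiding na c0a) c0Z.
have aX := avoiding_vset sX.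
have nc : n != c by apply: contraNneq nZ => ->.
have /andP[nX cX] := is_path_ends pX nc.
have ca : c != a by apply: contraNneq aX => <-.
have [z [Q [zT sQ pQ QT]]] := connect_first_hit (is_path_connected pX cX nX) nT.
have vsQ := subsetP (vsetS sQ).
exists c, z, Q; split=> //; split=> //; first by apply: contra aX => /vsQ.
apply/subsetP => y /setIP[yQ yZ]; exact/set1P/(setI_sub1 XZ (vsQ y yQ) yZ).
Qed.

Lemma meets_twice_of_unique_common_vertex Z N m : is_circle Z -> e0 \in Z ->
  is_circle N -> m \in vset Z -> m \in vset N ->
  (forall y, y \in vset Z -> y \in vset N -> y = m) -> circle_meeting_twice N.
Proof.
move=> cZ e0Z cN mZ mN ZNm.
have [n nN nm] := circle_other_vertex m cN.
have nT : n \in vset N :\ m by rewrite in_setD1 nm nN.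
have dTZ : [disjoint vset N :\ m & vset Z].
  by apply: disjoint_notin => y; rewrite in_setD1 => /andP[ym yN]; apply: contraNN ym => /ZNm->.
have [c [z [Q [cZv cm zT pQ [mQ QZ QT]]]]] := detour cZ mZ nT dTZ.
move: (zT); rewrite in_setD1 => /andP[zm zN].
have [A sA pA] := connect_is_path (circle_connected cN zN mN).
have vsA := subsetP (vsetS sA).
have QA : vset Q :&: vset A \subset [set z].
  apply/subsetP => y /setIP[yQ yA]; apply/set1P/(setI_sub1 QT yQ).
  by rewrite in_setD1 vsA // andbT; apply: contraNneq mQ => <-.
have AZ : vset A :&: vset Z \subset [set m].
  by apply/subsetP => y /setIP[yA yZ]; apply/set1P/ZNm/vsA.
have QAZ : vset (Q :|: A) :&: vset Z \subset [set c; m].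
  apply/subsetP => y /setIP[]; rewrite vsetU => /setUP[] yQA yZ; apply/set2P.
    by left; exact: (setI_sub1 QZ yQA yZ).
  by right; exact: (setI_sub1 AZ yQA yZ).
have dQAZ : [disjoint Q :|: A & Z].
  by apply: disjoint_setUl; [apply: disjoint_vsetI1 QZ | apply: disjoint_vsetI1 AZ].
have [Z' [cZ' e0Z' sQA _]] :=
  circle_reroute cZ e0Z cm cZv mZ (is_path_cat pQ pA QA) QAZ dQAZ.
have /andP[zA mA] := is_path_ends pA zm.
exists Z'; split=> //; exists z, m.
by split=> //; apply: sQA; rewrite vsetU inE ?zA ?mA orbT.
Qed.

Lemma meets_twice_of_common_vertex Z N m : is_circle Z -> e0 \in Z ->
  is_circle N -> m \in vset Z -> m \in vset N -> circle_meeting_twice N.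
Proof.
move=> cZ e0Z cN mZ mN.
have [/existsP[y /and3P[yZ yN ym]]|] :=
  boolP [exists y, [&& y \in vset Z, y \in vset N & y != m]].
  by exists Z; split=> //; exists y, m.
rewrite negb_exists => /forallP noy.
apply: (meets_twice_of_unique_common_vertex cZ e0Z cN mZ mN) => y yZ yN.
by apply/eqP; move: (noy y); rewrite yZ yN negbK.
Qed.

Definition linked N Z P n a :=
  [/\ [disjoint vset N & vset Z], n \in vset N, a \in vset Z, is_path P n a &
      vset P :&: vset N \subset [set n] /\ vset P :&: vset Z \subset [set a]].

(* The detour [Q] from [c] on [Z] first meets [N] or [P] at the hub [z]. *)
Section LinkedStep.
Variables (N Z P Q : {set E}) (n a c z : V).
Hypotheses (cN : is_circle N) (cZ : is_circle Z) (e0Z : e0 \in Z).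
Hypothesis link : linked N Z P n a.
Let T := (vset N :|: vset P) :\ a.
Hypotheses (cZv : c \in vset Z) (ca : c != a) (zT : z \in T) (pQ : is_path Q c z).
Hypotheses (aQ : a \notin vset Q) (QZ : vset Q :&: vset Z \subset [set c])
  (QT : vset Q :&: T \subset [set z]).

Lemma hub_first_meet y : y \in vset Q -> y \in vset N \/ y \in vset P -> y = z.
Proof.
move=> yQ yNP; apply: (setI_sub1 QT yQ).
rewrite in_setD1 in_setU; apply/andP; split; first by apply: contraNneq aQ => <-.
by case: yNP => ->; rewrite ?orbT.
Qed.

Lemma hub_neq : z != a.
Proof. by move: zT; rewrite in_setD1 => /andP[]. Qed.

Lemma hub_notin_Z : z \notin vset Z.
Proof.
have [dNZ _ _ _ [_ PZ]] := link.
move: zT; rewrite in_setD1 in_setU => /andP[za /orP[zN|zP]]; first by rewrite (disjointFr dNZ zN).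
by apply: contraNN za => zZ; apply/eqP/(setI_sub1 PZ zP zZ).
Qed.

Lemma linked_ends_neq : n != a.
Proof.
by have [dNZ nN aZ _ _] := link; apply: contraTneq aZ => <-; rewrite (disjointFr dNZ nN).
Qed.

Lemma hub_in_detour : z \in vset Q.
Proof.
have cz : c != z by apply: contraNneq hub_notin_Z => <-.
by have /andP[] := is_path_ends pQ cz.
Qed.

Lemma hub_on_circle : z \notin vset P -> circle_meeting_twice N.
Proof.
move=> zP; have [dNZ nN aZ pP [PN PZ]] := link.
have zN : z \in vset N by move: zT; rewrite in_setD1 in_setU (negbTE zP) orbF => /andP[].
have /andP[nP _] := is_path_ends pP linked_ends_neq.
have nz : n != z by apply: contraNneq zP => <-.
have [A sA pA] := connect_is_path (circle_connected cN nN zN).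
have vsA := subsetP (vsetS sA).
have PA : vset P :&: vset A \subset [set n].
  by apply/subsetP => y /setIP[yP yA]; apply/set1P/(setI_sub1 PN yP (vsA y yA)).
have PAQ : vset (P :|: A) :&: vset Q \subset [set z].
  apply/subsetP => y /setIP[]; rewrite vsetU => /setUP[] yPA yQ; apply/set1P/hub_first_meet => //.
    by right.
  by left; apply: vsA.
have pW := is_path_cat (is_path_cat (is_path_rev pP) pA PA) (is_path_rev pQ) PAQ.
have AZ : vset A :&: vset Z \subset [set a].
  by apply/subsetP => y /setIP[/vsA yN]; rewrite (disjointFr dNZ yN).
have WZ : vset (P :|: A :|: Q) :&: vset Z \subset [set a; c].
  apply/subsetP => y /setIP[]; rewrite !vsetU => /setUP[/setUP[]|] yW yZ; apply/set2P.
  - by left; apply: (setI_sub1 PZ yW yZ).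
  - by left; apply: (setI_sub1 AZ yW yZ).
  - by right; apply: (setI_sub1 QZ yW yZ).
have dWZ : [disjoint P :|: A :|: Q & Z].
  by do 2?apply: disjoint_setUl; apply: disjoint_vsetI1; [apply: PZ | apply: AZ | apply: QZ].
have ac : a != c by rewrite eq_sym.
have [Z' [cZ' e0Z' sWZ' _]] := circle_reroute cZ e0Z ac aZ cZv pW WZ dWZ.
exists Z'; split=> //; exists n, z; split=> //; apply: sWZ'; rewrite !vsetU !in_setU ?nP //.
by rewrite hub_in_detour orbT.
Qed.

Lemma linked_after_reroute X Z' : X \subset P -> is_path X n z -> z != n -> z \in vset Z' ->
  {subset vset Z' <= vset Z :|: vset (P :\: X :|: Q)} -> linked N Z' X n z.
Proof.
move=> sX pX zn zZ' sZ'.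
have [dNZ nN aZ pP [PN PZ]] := link.
have [pY XY] := is_path_split pP sX pX.
have vsX := subsetP (vsetS sX); have vsY := subsetP (vsetS (subsetDl P X)).
have nz : n != z by rewrite eq_sym.
have /andP[nX zX] := is_path_ends pX nz.
have /andP[_ aY] := is_path_ends pY hub_neq.
split=> //; last split.
- apply: disjoint_notin => y yN; apply/negP => /sZ'.
  rewrite vsetU !in_setU => /orP[yZ|/orP[yY|yQ]]; first by rewrite (disjointFr dNZ yN) in yZ.
    have yn := setI_sub1 PN (vsY y yY) yN; rewrite yn in yY.
    by move: zn; rewrite (setI_sub1 XY nX yY) eqxx.
  have yz := hub_first_meet yQ (or_introl yN); rewrite yz in yN.
  by move: zn; rewrite (setI_sub1 PN (vsX z zX) yN) eqxx.
- by apply/subsetP => y /setIP[yX yN]; apply/set1P/(setI_sub1 PN (vsX y yX) yN).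
apply/subsetP => y /setIP[yX /sZ']; rewrite vsetU !in_setU => /orP[yZ|/orP[yY|yQ]]; apply/set1P.
- by have ya := setI_sub1 PZ (vsX y yX) yZ; rewrite ya in yX *; apply: (setI_sub1 XY yX aY).
- exact: (setI_sub1 XY yX yY).
- exact: (hub_first_meet yQ (or_intror (vsX y yX))).
Qed.

Lemma hub_on_path : z \in vset P -> circle_meeting_twice N \/
  exists Z' P' n' a', [/\ is_circle Z', e0 \in Z', #|P'| < #|P| & linked N Z' P' n' a'].
Proof.
move=> zP; have [dNZ nN aZ pP [_ PZ]] := link.
have /andP[nP _] := is_path_ends pP linked_ends_neq.
have [X sX pX] := connect_is_path (is_path_connected pP nP zP).
have [pY XY] := is_path_split pP sX pX; set Y := P :\: X in pY XY.
have vsY := subsetP (vsetS (subsetDl P X)).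
have YQ : vset Y :&: vset Q \subset [set z].
  by apply/subsetP => y /setIP[yY yQ]; apply/set1P/hub_first_meet => //; right; apply: vsY.
have YZ : vset Y :&: vset Z \subset [set a].
  by apply/subsetP => y /setIP[yY yZ]; apply/set1P/(setI_sub1 PZ (vsY y yY) yZ).
have WZ : vset (Y :|: Q) :&: vset Z \subset [set a; c].
  apply/subsetP => y /setIP[]; rewrite vsetU => /setUP[] yW yZ; apply/set2P.
    by left; apply: (setI_sub1 YZ yW yZ).
  by right; apply: (setI_sub1 QZ yW yZ).
have dWZ : [disjoint Y :|: Q & Z].
  by apply: disjoint_setUl; apply: disjoint_vsetI1; [apply: YZ | apply: QZ].
have ac : a != c by rewrite eq_sym.
have [Z' [cZ' e0Z' sWZ' sZ'W]] :=
  circle_reroute cZ e0Z ac aZ cZv (is_path_cat (is_path_rev pY) (is_path_rev pQ) YQ) WZ dWZ.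
have zZ' : z \in vset Z' by apply: sWZ'; rewrite vsetU in_setU hub_in_detour orbT.
have [zn|zn] := eqVneq z n.
  by left; apply: (meets_twice_of_common_vertex cZ' e0Z' cN zZ'); rewrite zn.
right; exists Z', X, n, z; split=> //; last exact: linked_after_reroute.
rewrite -(cardsID X P) (setIidPr sX) -addn1 leq_add2l card_gt0 -vset_eq0.
by apply/set0Pn; exists z; have /andP[] := is_path_ends pY hub_neq.
Qed.

End LinkedStep.

(* If the hub lies on [N], rerouting [Z] along [P], an arc of [N] and the detour meets [N]
   twice; if it lies on [P], rerouting along the detour and the far part of [P] leaves a
   shorter link by the near part of [P]. *)
Lemma linked_step N Z P n a : is_circle N -> is_circle Z -> e0 \in Z -> linked N Z P n a ->
  circle_meeting_twice N \/
  exists Z' P' n' a', [/\ is_circle Z', e0 \in Z', #|P'| < #|P| & linked N Z' P' n' a'].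
Proof.
move=> cN cZ e0Z link; have [dNZ nN aZ pP [_ PZ]] := link.
have nT : n \in (vset N :|: vset P) :\ a by rewrite in_setD1 in_setU nN (linked_ends_neq link).
have dTZ : [disjoint (vset N :|: vset P) :\ a & vset Z].
  apply: disjoint_notin => y; rewrite in_setD1 in_setU => /andP[ya /orP[yN|yP]].
    by rewrite (disjointFr dNZ yN).
  by apply: contraNN ya => yZ; apply/eqP/(setI_sub1 PZ yP yZ).
have [c [z [Q [cZv ca zT pQ [aQ QZ QT]]]]] := detour cZ aZ nT dTZ.
have [zP|zP] := boolP (z \in vset P).
  exact: (hub_on_path cN cZ e0Z link cZv ca zT pQ aQ QZ QT zP).
by left; apply: (hub_on_circle cN cZ e0Z link cZv ca zT pQ aQ QZ QT zP).
Qed.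

Lemma linked_meets_twice N Z P n a : is_circle N -> is_circle Z -> e0 \in Z ->
  linked N Z P n a -> circle_meeting_twice N.
Proof.
move=> cN; move: {2}#|P| (leqnn #|P|) => k; elim: k Z P n a => [|k IHk] Z P n a sizeP cZ e0Z link.
all: have [//|[Z' [P' [n' [a' [cZ' e0Z' ltP link']]]]]] := linked_step cN cZ e0Z link.
  by move: (leq_trans ltP sizeP).
by apply: (IHk Z' P' n' a' _ cZ' e0Z' link'); rewrite -ltnS (leq_trans ltP sizeP).
Qed.

Lemma circle_meets_twice N Z : is_circle N -> is_circle Z -> e0 \in Z -> circle_meeting_twice N.
Proof.
move=> cN cZ e0Z.
have [/existsP[m /andP[mZ mN]]|] := boolP [exists m, (m \in vset Z) && (m \in vset N)].
  exact: meets_twice_of_common_vertex cZ e0Z cN mZ mN.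
rewrite negb_exists => /forallP noZN.
have dNZ : [disjoint vset N & vset Z].
  by apply: disjoint_notin => y yN; move: (noZN y); rewrite yN andbT.
have [n0 n0N] : exists n0, n0 \in vset N by apply/set0Pn; rewrite vset_eq0; case: cN.
have [z0 z0Z] : exists z0, z0 \in vset Z by apply/set0Pn; rewrite vset_eq0; case: cZ.
have [a [X [aZ _ pX XZ]]] := connect_first_hit (connect_all n0 z0) z0Z.
have n0a : n0 != a by apply: contraTneq aZ => <-; rewrite (disjointFr dNZ n0N).
have /andP[n0X aX] := is_path_ends pX n0a.
have [n [Y [nN sY pY YN]]] := connect_first_hit (is_path_connected pX aX n0X) n0N.
apply: (linked_meets_twice cN cZ e0Z (P := Y) (n := n) (a := a)).
split=> //; first exact: is_path_rev.
split=> //; apply/subsetP => y /setIP[yY yZ].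
exact/set1P/(setI_sub1 XZ (subsetP (vsetS sY) y yY) yZ).
Qed.

Lemma battery_disjoint_circle_positive C N : is_circle C -> e0 \in C ->
  (forall C', is_circle C' -> e0 \in C' -> positive C' -> C' = C) ->
  is_circle N -> [disjoint N & C] -> positive N.
Proof.
move=> cC e0C uniqC cN dNC; apply/negP => negN.
have e0N : e0 \notin N by rewrite (disjointFl dNC e0C).
have [Z [cZ e0Z twice]] := circle_meets_twice cN cC e0C.
have [u [v [X [Y [uv uN vN earXY]]]]] := ear_of_meeting_circle cZ e0Z twice.
have [C' [cC' posC' e0C' meetN]] := ear_positive_circle earXY e0N cN negN uv uN vN.
by move: meetN; rewrite (uniqC C' cC' e0C' posC') disjoint_sym dNC.
Qed.

End TwoConnected.

End Loopless.

Lemma circle_subset1 C f : ~~ is_loop ends f -> C \subset [set f] -> ~ is_circle C.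
Proof.
move=> f12 sCf [C0 [degC _]]; move: sCf; rewrite subset1 (negbTE C0) orbF => /eqP C1.
have fC : f \in C by rewrite C1 set11.
have /andP[f1C _] := ends_vset fC.
move: (degC _ f1C); rewrite C1 deg_set1 /end_mult eqxx eq_sym.
by move: f12; rewrite /is_loop => /negbTE ->.
Qed.

Lemma component_bridge_disjoint C x :
  x \notin vset C ->
  [disjoint [set f | [exists u, incident u f && connect (adj_avoid ends (vset C)) x u]] & C].
Proof.
move=> xC; apply: disjoint_notin => f; rewrite inE => /existsP[u /andP[uf xu]].
have uC : u \notin vset C.
  by apply: (connect_closed (S := fun y => y \notin vset C) _ xC xu) => y w _ /and3P[].
by apply: contraNN uC => fC; apply: incident_vset fC uf.
Qed.

Section Block.
Hypothesis block : is_block ends.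

Lemma block_loopless : ~ single_edge E -> forall f, ~~ is_loop ends f.
Proof. by have [_ [_ loop1]] := block; move=> not_edge f; apply/negP => /loop1. Qed.

Lemma block_connect u w : connect (adjE [set: E]) u w.
Proof.
have [conn0 _] := block; apply: connect_sub (conn0 u w _ _); rewrite ?inE //.
by move=> y z /and3P[_ _ yz]; apply: connect1.
Qed.

Lemma block_connect_avoiding x u w : u != x -> w != x -> connect (adjE (avoiding x)) u w.
Proof.
have [_ [conn1 _]] := block; move=> ux wx.
apply: connect_sub (conn1 x u w _ _); rewrite ?inE //.
move=> y z /and3P[]; rewrite !inE => yx zx /adjEP[g _ ends_g].
apply/connect1/existsP; exists g; rewrite !inE /incident.
by case: ends_g => -> /=; rewrite (negbTE yx) (negbTE zx) eqxx ?orbT.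
Qed.

End Block.

End Graphs.

Theorem mainTheorem5 (V E : finType) (ends : E -> V * V) (sig : E -> bool)
  (e : E) (C : {set E}) :
  is_block ends ->
  ~ single_edge E ->
  ~ graph_is_circle ends ->
  battery_pos ends sig e C ->
  forall D : {set E}, is_bridge ends C D -> balanced ends sig D.
Proof.
move=> block not_edge _ [cC eC _ uniqC] D bridge C' sC'D cC'.
case: bridge => [[f [_ _ _ f12 D1]]|[x [xC D_comp]]].
  by rewrite D1 in sC'D; case: (circle_subset1 f12 sC'D cC').
have loopless := block_loopless block not_edge.
apply: (battery_disjoint_circle_positive loopless (block_connect_avoiding block)
          (block_connect block) cC eC uniqC cC').
by apply: disjointWl sC'D _; rewrite D_comp; apply: component_bridge_disjoint.
Qed.
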